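(* A function quasi-norm $\rho$ over a $\sigma$-finite measure space $(\Omega,\Sigma,\mu)$ is locally dominating if and only if $\lim_{t\to0^+}\Phi[E,\rho](t)=0$ for every $E\in\Sigma$ with $\mu(E)<\infty$, where $\Phi[E,\rho](t)=\sup\{\rho(\chi_A):A\in\Sigma,\ A\subseteq E,\ \mu(A)\le t\}$.
   Context: $L_0^+(\mu)$: measurable functions $\Omega\to[0,\infty]$ modulo a.e. equality. A function quasi-norm is $\rho\colon L_0^+(\mu)\to[0,\infty]$ with (F1) $\rho(tf)=t\rho(f)$, $t\ge0$; (F2) $f\le g$ a.e. $\Rightarrow\rho(f)\le\rho(g)$; (F3) $\rho(\chi_E)<\infty$ if $\mu(E)<\infty$; (F4) for all $E$ with $\mu(E)<\infty$ and $\varepsilon>0$ there is $\delta>0$ with $\mu(A)\le\varepsilon$ whenever $A\subseteq E$ measurable and $\rho(\chi_A)\le\delta$; (F5) $\rho(f+g)\le\kappa(\rho(f)+\rho(g))$. $f\in L_0^+(\mu)$ with $\rho(f)<\infty$ is dominating if $\lim_n\rho(f_n)=0$ for every non-increasing $(f_n)$ in $L_0^+(\mu)$ with $f_1\le f$ and $\lim_nf_n=0$. $\rho$ is locally dominating if $\chi_E$ is dominating for every $E\in\Sigma$ with $\mu(E)<\infty$. *)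

From HB Require Import structures.
From mathcomp Require Import all_boot all_order all_algebra.
From mathcomp Require Import all_classical all_reals all_analysis.
From mathcomp Require Import measurable_realfun.
Set Implicit Arguments. Unset Strict Implicit. Unset Printing Implicit Defensive.
Import Order.TTheory GRing.Theory Num.Theory.
Local Open Scope classical_set_scope.
Local Open Scope ring_scope.
Local Open Scope ereal_scope.

Section QuasiNorm.
Context (d : measure_display) (T : measurableType d) (R : realType)
  (mu : {measure set T -> \bar R}).

Definition L0p (f : T -> \bar R) : Prop :=
  measurable_fun setT f /\ forall x, 0 <= f x.

Definition chi (E : set T) : T -> \bar R := fun x => (\1_E x)%:E.

Definition qn_nonneg (rho : (T -> \bar R) -> \bar R) : Prop :=
  forall f, L0p f -> 0 <= rho f.

Definition qn_F1 (rho : (T -> \bar R) -> \bar R) : Prop :=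
  forall f (t : R), L0p f -> (0 <= t)%R ->
    rho (fun x => t%:E * f x) = t%:E * rho f.

(* (F2) monotonicity w.r.t. a.e. order (this also gives invariance under
   a.e. equality, i.e. rho is well defined on L_0^+(mu)) *)
Definition qn_F2 (rho : (T -> \bar R) -> \bar R) : Prop :=
  forall f g, L0p f -> L0p g -> {ae mu, forall x, f x <= g x} ->
    rho f <= rho g.

Definition qn_F3 (rho : (T -> \bar R) -> \bar R) : Prop :=
  forall E, measurable E -> mu E < +oo -> (rho (chi E) < +oo).

Definition qn_F4 (rho : (T -> \bar R) -> \bar R) : Prop :=
  forall E, measurable E -> mu E < +oo -> forall eps : R, (0 < eps)%R ->
    exists delta : R, (0 < delta)%R /\
      forall A, measurable A -> A `<=` E -> rho (chi A) <= delta%:E ->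
        mu A <= eps%:E.

Definition qn_F5 (rho : (T -> \bar R) -> \bar R) : Prop :=
  exists kappa : R, (1 <= kappa)%R /\
    forall f g, L0p f -> L0p g ->
      rho (fun x => f x + g x) <= kappa%:E * (rho f + rho g).

Definition function_quasi_norm (rho : (T -> \bar R) -> \bar R) : Prop :=
  [/\ qn_nonneg rho, qn_F1 rho, qn_F2 rho, qn_F3 rho & (qn_F4 rho /\ qn_F5 rho)].

Definition dominating (rho : (T -> \bar R) -> \bar R) (f : T -> \bar R) : Prop :=
  [/\ L0p f, rho f < +oo &
      forall fn : nat -> T -> \bar R,
        (forall n, L0p (fn n)) ->
        (forall n, {ae mu, forall x, fn n.+1 x <= fn n x}) ->
        {ae mu, forall x, fn 0%N x <= f x} ->
        {ae mu, forall x, (fun n => fn n x) @ \oo --> 0} ->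
        (fun n => rho (fn n)) @ \oo --> 0].

Definition locally_dominating (rho : (T -> \bar R) -> \bar R) : Prop :=
  forall E, measurable E -> mu E < +oo -> dominating rho (chi E).

Definition Phi (E : set T) (rho : (T -> \bar R) -> \bar R) (t : R) : \bar R :=
  ereal_sup [set rho (chi A) | A in [set A | [/\ measurable A, A `<=` E & mu A <= t%:E]]].

End QuasiNorm.

From HB Require Import structures.
From mathcomp Require Import all_boot all_order all_algebra.
From mathcomp Require Import all_classical all_reals all_analysis.
From mathcomp Require Import measurable_realfun.
From mathcomp Require Import ring.
Import Order.TTheory GRing.Theory Num.Theory.
Local Open Scope classical_set_scope.
Local Open Scope ring_scope.
Local Open Scope ereal_scope.

(* If Phi[E, rho] tends to 0 and 0 <= f_n <= chi_E decreases to 0 a.e., then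
   f_n <= e chi_E + chi_(A_n) with A_n = E ∩ {f_n > e}.  Since mu E is finite,
   a.e. convergence gives mu (A_n) -> 0, so rho (chi_(A_n)) <= Phi[E, rho](t)
   eventually, and the quasi-triangle inequality makes rho (f_n) small.
   Conversely, if the nondecreasing function Phi[E, rho] stays above some eps,
   pick A_n inside E with mu (A_n) <= 2^-(n+1) and rho (chi_(A_n)) > eps.  By
   Borel-Cantelli the tails ⋃_(k ≥ n) A_k decrease to a null set, so
   domination of chi_E forces rho of their indicators to 0, although each of
   them dominates chi_(A_n). *)

Section ereal_cvg0.
Context {R : realType} {X : Type} {F : set_system X} {FF : Filter F}.
Implicit Types f : X -> \bar R.

Lemma cvge0_lt f : f @ F --> 0 ->
  forall e : R, (0 < e)%R -> \forall x \near F, f x < e%:E.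
Proof.
by move=> f0 e e0; move: (@nbhs_open_ereal_lt R 0%R (fun=> e) e0) => /f0.
Qed.

Lemma cvge0_nonneg f :
  (forall e : R, (0 < e)%R -> \forall x \near F, 0 <= f x <= e%:E) ->
  f @ F --> 0.
Proof.
move=> fe; apply/fine_cvgP; split.
  apply: filterS (fe 1%R ltr01) => x /andP[f0 f1].
  by rewrite ge0_fin_numE // (le_lt_trans f1) // ltry.
apply/cvgrPdist_le => e e0; apply: filterS (fe e e0) => x /andP[f0 fe'] /=.
rewrite sub0r normrN ger0_norm ?fine_ge0 // -lee_fin fineK //.
by rewrite ge0_fin_numE // (le_lt_trans fe') // ltry.
Qed.

End ereal_cvg0.
Arguments cvge0_lt {R X F f}.

Lemma cvge_at_right0_nondecreasingP {R : realType} (f : R -> \bar R) :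
  (forall t, (0 < t)%R -> 0 <= f t) -> nondecreasing_fun f ->
  f t @[t --> 0%R^'+] --> 0 <->
  forall e : R, (0 < e)%R -> exists2 t, (0 < t)%R & f t <= e%:E.
Proof.
move=> f0 fnd; split => [f_cvg e e0|fe].
  have [t [t0 fte]] :=
    filter_ex (filterI (nbhs_right_gt 0%R) (cvge0_lt f_cvg _ e0)).
  by exists t => //; exact: ltW.
apply: cvge0_nonneg => e /fe[t0 t00 ft0].
apply: filterS2 (nbhs_right_gt 0%R) (nbhs_right_lt t00) => t t0' tt0.
by rewrite f0 //= (le_trans _ ft0) // fnd // ltW.
Qed.

Section chi.
Context {d} {T : measurableType d} {R : realType}.

Lemma L0p_chi {A : set T} : measurable A -> L0p (chi R A).
Proof.
move=> mA; split; first by apply/measurable_EFinP; exact: measurable_indic.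
by move=> x; rewrite /chi lee_fin indicE.
Qed.

Lemma chi_le (A B : set T) x : A `<=` B -> chi R A x <= chi R B x.
Proof.
move=> AB; rewrite /chi lee_fin !indicE.
by have [/set_mem/AB/mem_set->|_] := boolP (x \in A); case: (x \in B).
Qed.

Lemma chi_tail_cvg0 (A : (set T)^nat) x : ~ lim_sup_set A x ->
  chi R (\bigcup_(k >= n) A k) x @[n --> \oo] --> 0.
Proof.
move=> /existsNP[N /not_implyP[_ notAN]]; apply: cvg_near_cst.
exists N => // n /= Nn; rewrite /chi indicE memNset // => -[k /= nk Akx].
by apply: notAN; exists k => //=; exact: leq_trans nk.
Qed.

Lemma L0pZ {f : T -> \bar R} {e : R} : (0 <= e)%R -> L0p f ->
  L0p (fun x => e%:E * f x).
Proof.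
move=> e0 [mf f0]; split; first exact: measurable_funeM.
by move=> x; rewrite mule_ge0 ?lee_fin.
Qed.

Lemma L0pD {f g : T -> \bar R} : L0p f -> L0p g -> L0p (fun x => f x + g x).
Proof.
move=> [mf f0] [mg g0]; split; first exact: emeasurable_funD.
by move=> x; rewrite adde_ge0.
Qed.

Lemma le_chi_split (E : set T) (f : T -> \bar R) (e : R) x :
  (0 <= e)%R -> 0 <= f x -> f x <= chi R E x ->
  f x <= e%:E * chi R E x + chi R (E `&` [set y | e%:E < f y]) x.
Proof.
rewrite /chi !indicE => e0 f0; have [xE|xE] /= := boolP (x \in E); last first.
  by rewrite mule0 add0e => /le_trans; apply; rewrite lee_fin ler0n.
rewrite mule1; have [fe|] := ltP e%:E (f x).
  rewrite mem_set; last by split; [exact: set_mem|].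
  by move=> /le_trans; apply; rewrite lee_fin lerDr.
by move=> fe _; rewrite -[leLHS]adde0 leeD // lee_fin ler0n.
Qed.

End chi.

Section convergence_in_measure.
Context {d} {T : measurableType d} {R : realType}.
Variable mu : {measure set T -> \bar R}.

Lemma ae_cvg0_in_measure {E : set T} {f : (T -> \bar R)^nat} {e : R} :
  measurable E -> mu E < +oo -> (forall n, measurable_fun setT (f n)) ->
  (0 < e)%R -> {ae mu, forall x, f n x @[n --> \oo] --> 0} ->
  mu (E `&` [set x | e%:E < f n x]) @[n --> \oo] --> 0.
Proof.
move=> mE muE mf e0 [N [mN muN0 fN]].
pose A n := E `&` [set x | e%:E < f n x].
have mA n : measurable (A n).
  by apply: emeasurable_fun_o_infty => //; exact: measurable_funS (mf n).
have mlimA : measurable (lim_sup_set A).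
  by apply: bigcap_measurable => // n _; exact: bigcup_measurable.
have limA0 : mu (lim_sup_set A) = 0.
  apply: subset_measure0 muN0 => // x limAx.
  apply: fN => /cvge0_lt/(_ e e0)[M _ fM].
  have [k /= Mk [_ /=]] := limAx M I.
  by move=> /lt_trans/(_ (fM k Mk)); rewrite ltxx.
have tailA_fin : mu (\bigcup_(k >= 0) A k) < +oo.
  apply: le_lt_trans muE; apply: le_measure; rewrite ?inE //.
    exact: bigcup_measurable.
  by move=> x [k _ []].
apply: (@squeeze_cvge _ _ _ _ (cst 0) _ (fun n => mu (\bigcup_(k >= n) A k))).
- apply: nearW => n; rewrite measure_ge0 /=.
  apply: le_measure; rewrite ?inE; [exact: mA|exact: bigcup_measurable|].
  by move=> x Anx; exists n => /=.
- exact: cvg_cst.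
- by rewrite -limA0; exact: lim_sup_set_cvg.
Qed.

End convergence_in_measure.

Section quasi_norm.
Context {d} {T : measurableType d} {R : realType}.
Context {mu : {measure set T -> \bar R}} {rho : (T -> \bar R) -> \bar R}.
Hypotheses (rho_ge0 : qn_nonneg rho) (rho_homo : qn_F1 rho).
Hypotheses (rho_ae_mono : qn_F2 mu rho) (rho_chi_fin : qn_F3 mu rho).
Variable kappa : R.
Hypothesis kappa_gt0 : (0 < kappa)%R.
Hypothesis rho_quasi_triangle : forall f g, L0p f -> L0p g ->
  rho (fun x => f x + g x) <= kappa%:E * (rho f + rho g).

Lemma rho_chi_ge0 {A : set T} : measurable A -> 0 <= rho (chi R A).
Proof. by move=> mA; exact/rho_ge0/L0p_chi. Qed.

Lemma le_rho_chi {A B : set T} : measurable A -> measurable B -> A `<=` B ->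
  rho (chi R A) <= rho (chi R B).
Proof.
move=> mA mB AB; apply: rho_ae_mono; [exact: L0p_chi|exact: L0p_chi|].
by apply: aeW => x; exact: chi_le.
Qed.

Lemma Phi_nondecreasing (E : set T) : nondecreasing_fun (Phi mu E rho).
Proof.
move=> s t st; apply: ereal_sup_le => _ [A [mA AE muA] <-]; exists A => //.
by split => //; apply: le_trans muA _; rewrite lee_fin.
Qed.

Lemma rho_chi_le_Phi (E A : set T) (t : R) : measurable A -> A `<=` E ->
  mu A <= t%:E -> rho (chi R A) <= Phi mu E rho t.
Proof. by move=> mA AE muA; apply: ereal_sup_ubound; exists A. Qed.

Lemma Phi_ge0 (E : set T) (t : R) : (0 <= t)%R -> 0 <= Phi mu E rho t.
Proof.
move=> t0; have := @rho_chi_le_Phi E set0 t measurable0 (sub0set E).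
rewrite measure0 lee_fin => /(_ t0); apply: le_trans.
exact: rho_chi_ge0.
Qed.

Lemma Phi_cvg0P (E : set T) : Phi mu E rho t @[t --> 0%R^'+] --> 0 <->
  forall e : R, (0 < e)%R -> exists2 t, (0 < t)%R & Phi mu E rho t <= e%:E.
Proof.
apply: cvge_at_right0_nondecreasingP; last exact: Phi_nondecreasing.
by move=> t /ltW; exact: Phi_ge0.
Qed.

Lemma dominating_chi_tail_cvg0 {E : set T} {A : (set T)^nat} :
  dominating mu rho (chi R E) -> (forall k, measurable (A k)) ->
  (forall k, A k `<=` E) -> mu (lim_sup_set A) = 0 ->
  rho (chi R (\bigcup_(k >= n) A k)) @[n --> \oo] --> 0.
Proof.
move=> [_ _ dom] mA AE limA0.
have mtail n : measurable (\bigcup_(k >= n) A k) by exact: bigcup_measurable.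
apply: dom => [n|n||].
- exact: L0p_chi.
- apply: aeW => x; apply: chi_le => y [k /= nk Aky].
  by exists k => //=; exact: ltnW.
- by apply: aeW => x; apply: chi_le => y [k _ /AE].
- exists (lim_sup_set A); split => //.
    by apply: bigcap_measurable => // n _; exact: mtail.
  by move=> x /= notcvg; apply: contrapT => /chi_tail_cvg0.
Qed.

Lemma dominating_chi_Phi_cvg0 (E : set T) : measurable E ->
  dominating mu rho (chi R E) -> Phi mu E rho t @[t --> 0%R^'+] --> 0.
Proof.
move=> mE dom; apply/Phi_cvg0P => e e0; apply: contrapT => Phi_big.
pose tn n : R := (1 / (2 ^ n.+1)%:R)%R.
have tn_gt0 n : (0 < tn n)%R by rewrite divr_gt0 // ltr0n expn_gt0.
have bad_set n : exists B, [/\ measurable B, B `<=` E, mu B <= (tn n)%:E &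
    e%:E < rho (chi R B)].
  have : e%:E < Phi mu E rho (tn n).
    by rewrite ltNge; apply/negP => Phi_le; apply: Phi_big; exists (tn n).
  by move=> /ereal_sup_gt[_ [B [mB BE muB] <-] eB]; exists B.
have [A HA] := choice bad_set.
have mA n : measurable (A n) by case: (HA n).
have AE n : A n `<=` E by case: (HA n).
have limA0 : mu (lim_sup_set A) = 0.
  apply: lim_sup_set_cvg0 => //; apply: (@le_lt_trans _ _ 1); last exact: ltry.
  apply: le_trans (epsilon_trick0 xpredT ler01).
  by apply: lee_nneseries => [n _ _|n _]; [exact: measure_ge0|case: (HA n)].
have tail_cvg := dominating_chi_tail_cvg0 dom mA AE limA0.
have [n /= tail_lt] := filter_ex (cvge0_lt tail_cvg _ e0).
have [_ _ _ eA] := HA n.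
have An_tail : A n `<=` \bigcup_(k >= n) A k by move=> x Anx; exists n => /=.
have := le_rho_chi (mA n) (bigcup_measurable (fun k _ => mA k)) An_tail.
by move=> /(lt_le_trans eA)/lt_trans/(_ tail_lt); rewrite ltxx.
Qed.

Lemma rho_le_chi_split {E : set T} {f : T -> \bar R} {e : R} :
  measurable E -> L0p f -> (0 <= e)%R -> {ae mu, forall x, f x <= chi R E x} ->
  rho f <= kappa%:E * (e%:E * rho (chi R E) +
                       rho (chi R (E `&` [set x | e%:E < f x]))).
Proof.
move=> mE Lf e0 fE; have LE : L0p (chi R E) := L0p_chi mE.
have mA : measurable (E `&` [set x | e%:E < f x]).
  by apply: emeasurable_fun_o_infty => //; exact: measurable_funS Lf.1.
have LeE := L0pZ e0 LE; have LA : L0p (chi R _) := L0p_chi mA.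
apply: le_trans (rho_ae_mono _ _ Lf (L0pD LeE LA) _) _.
  by apply: filterS fE => x; apply: le_chi_split => //; exact: Lf.2.
by rewrite -rho_homo //; exact: rho_quasi_triangle.
Qed.

Lemma Phi_cvg0_dominating_chi (E : set T) : measurable E -> mu E < +oo ->
  Phi mu E rho t @[t --> 0%R^'+] --> 0 -> dominating mu rho (chi R E).
Proof.
move=> mE muE /Phi_cvg0P Phi_small.
split; [exact: L0p_chi|exact: rho_chi_fin|move=> f Lf f_dec f0E f_cvg].
have fE : {ae mu, forall x n, f n x <= chi R E x}.
  apply: filterS2 f0E (ae_foralln f_dec) => x f0x fdec.
  by elim=> // n ih; exact: le_trans (fdec n) ih.
have [r rE r0] : exists2 r, rho (chi R E) = r%:E & (0 <= r)%R.
  have r_ge0 := rho_chi_ge0 mE.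
  exists (fine (rho (chi R E))); last exact: fine_ge0.
  by rewrite fineK // ge0_fin_numE // rho_chi_fin.
apply: cvge0_nonneg => eps eps0.
pose delta := (eps / (2 * kappa))%R.
have delta0 : (0 < delta)%R by rewrite divr_gt0 // mulr_gt0.
have [t t0 Phi_t] := Phi_small delta delta0.
pose e := (delta / (r + 1))%R.
have e0 : (0 < e)%R by rewrite divr_gt0 // ltr_wpDl.
have er : (e * r <= delta)%R.
  by rewrite /e mulrAC ler_pdivrMr ?ltr_wpDl // ler_pM2l // lerDl.
have muA_cvg := ae_cvg0_in_measure mu mE muE (fun n => (Lf n).1) e0 f_cvg.
apply: filterS (cvge0_lt muA_cvg _ t0) => n muA; rewrite rho_ge0 //=.
have fnE : {ae mu, forall x, f n x <= chi R E x}.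
  by apply: filterS fE => x /(_ n).
apply: le_trans (rho_le_chi_split mE (Lf n) (ltW e0) fnE) _.
have rhoA : rho (chi R (E `&` [set x | e%:E < f n x])) <= delta%:E.
  apply: le_trans Phi_t; apply: rho_chi_le_Phi => //; last exact: ltW.
  by apply: emeasurable_fun_o_infty => //; exact: measurable_funS (Lf n).1.
have -> : eps = (kappa * (delta + delta))%R.
  by rewrite /delta; field; rewrite gt_eqF.
rewrite [leRHS]EFinM rE; apply: lee_wpmul2l; first by rewrite lee_fin ltW.
by rewrite EFinD leeD // -!EFinM lee_fin.
Qed.

Lemma dominating_chiP (E : set T) : measurable E -> mu E < +oo ->
  dominating mu rho (chi R E) <-> Phi mu E rho t @[t --> 0%R^'+] --> 0.
Proof.
move=> mE muE; split; first exact: dominating_chi_Phi_cvg0.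
exact: Phi_cvg0_dominating_chi.
Qed.

End quasi_norm.

Theorem corollary3p23 (d : measure_display) (T : measurableType d) (R : realType)
  (mu : {measure set T -> \bar R}) (rho : (T -> \bar R) -> \bar R) :
  sigma_finite setT mu ->
  function_quasi_norm mu rho ->
  (locally_dominating mu rho <->
   forall E, measurable E -> mu E < +oo ->
     Phi mu E rho t @[t --> 0%R^'+] --> 0).
Proof.
move=> _ [rho_ge0 rho_homo rho_ae_mono rho_chi_fin
  [_ [kappa [kappa_ge1 rho_tri]]]].
have kappa_gt0 : (0 < kappa)%R by exact: lt_le_trans ltr01 kappa_ge1.
have chiP :=
  dominating_chiP rho_ge0 rho_homo rho_ae_mono rho_chi_fin _ kappa_gt0 rho_tri.
split=> [dom E mE muE|Phi_cvg0 E mE muE].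
- by apply/chiP => //; exact: dom.
- by apply/chiP => //; exact: Phi_cvg0.
Qed.
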